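(* Let $K=\mathbb{F}_q$ be a finite field, $S=K[t_1,\ldots,t_s]$, let $\mathbb{X}\subset\mathbb{P}^{s-1}$ with $|\mathbb{X}|\geq 2$, let $I=I(\mathbb{X})$, and let $\prec$ be a monomial order on $S$. Then for every $d\geq 1$, $$\delta_{\mathbb{X}}(d)=\deg(S/I)-\max\{\deg(S/(I,f)): f\in\mathcal{F}_{\prec,d}\}\geq 1.$$
   Context: $I(\mathbb{X})$ is the ideal generated by the homogeneous polynomials vanishing on $\mathbb{X}$; $V_{\mathbb{X}}(f)$ is the set of zeros of a form $f$ in $\mathbb{X}$. $\delta_{\mathbb{X}}(d)$ is the minimum distance of the projective Reed–Muller-type code of degree $d$ on $\mathbb{X}$, i.e. $\delta_{\mathbb{X}}(d)=\min\{|\mathbb{X}|-|V_{\mathbb{X}}(f)|: f\in S_d,\ f\notin I(\mathbb{X})\}$. If $\{t^{a_1},\ldots,t^{a_n}\}$ is the set of standard monomials of degree $d$ (monomials of degree $d$ not in the initial ideal $\mathrm{in}_\prec(I)$), then $\mathcal{F}_{\prec,d}=\{f=\sum_i\lambda_it^{a_i}: \lambda_i\in K,\ f\neq0,\ (I\colon f)\neq I\}$, where $(I\colon f)=\{h\in S:hf\in I\}$. For a graded ideal $J$ with Hilbert function $H_J(d)=\dim_K(S_d/J_d)$ and $k=\dim(S/J)$, $\deg(S/J)=(k-1)!\lim_{d\to\infty}H_J(d)/d^{k-1}$ if $k\geq1$ and $\dim_K(S/J)$ if $k=0$. *)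

From HB Require Import structures.
From mathcomp Require Import all_boot all_order all_algebra.
From mathcomp Require Import mpoly.
From mathcomp Require Import boolp.

Set Implicit Arguments.
Unset Strict Implicit.
Unset Printing Implicit Defensive.

Import Order.TTheory GRing.Theory Num.Theory.
Local Open Scope ring_scope.

Section Defs.
Variables (K : fieldType) (s : nat).
Local Notation S := {mpoly K[s]}.

Definition pset := S -> Prop.

Definition gen_ideal (G : pset) : pset :=
  fun f => exists l : seq (S * S),
    f = \big[+%R/0]_(p <- l) (p.1 * p.2) /\ (forall p, p \in l -> G p.2).

Definition ideal_add (J : pset) (f : S) : pset :=
  gen_ideal (fun h => J h \/ h = f).

Definition colon (J : pset) (f : S) : pset := fun h => J (h * f).

Definition is_ideal (P : pset) : Prop :=
  P 0 /\ (forall a b, P a -> P b -> P (a + b)) /\ (forall r a, P a -> P (r * a)).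

Definition is_prime (P : pset) : Prop :=
  is_ideal P /\ ~ P 1 /\ (forall a b, P (a * b) -> P a \/ P b).

Definition subset_strict (P Q : pset) : Prop :=
  (forall f, P f -> Q f) /\ exists f, Q f /\ ~ P f.

Definition prime_chain (J : pset) (k : nat) : Prop :=
  exists c : nat -> pset,
    (forall i, (i <= k)%N -> is_prime (c i)) /\
    (forall f, J f -> c 0%N f) /\
    (forall i, (i < k)%N -> subset_strict (c i) (c i.+1)).

Definition krull_dim (J : pset) (k : nat) : Prop :=
  prime_chain J k /\ ~ prime_chain J k.+1.

Definition monoms (d : nat) := {m : 'X_{1..s < d.+1} | mdeg m == d}.

Definition nmonoms (d : nat) : nat := #|{: monoms d}|.

Definition poly_of (d : nat) (v : 'rV[K]_(nmonoms d)) : S :=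
  \big[+%R/0]_(i < nmonoms d) (v 0 i *: 'X_[val (val (@enum_val _ (mem {: monoms d}) i))]).

End Defs.

Section FinDefs.
Variables (K : finFieldType) (s : nat).
Local Notation S := {mpoly K[s]}.

(* J_d, as a set of coefficient vectors in K^(monomials of degree d) ~ S_d *)
Definition graded_piece (J : pset K s) (d : nat) : seq 'rV[K]_(nmonoms s d) :=
  [seq v <- enum [set: 'rV[K]_(nmonoms s d)] | asbool (J (poly_of v))].

(* Hilbert function H_J(d) = dim_K (S_d / J_d) = dim_K S_d - dim_K J_d *)
Definition hilbert_fun (J : pset K s) (d : nat) : nat :=
  (nmonoms s d - \dim (span (graded_piece J d)))%N.

(* deg(S/J) = e, where k = dim(S/J):
   if k >= 1, e = (k-1)! lim_{d -> oo} H_J(d)/d^(k-1);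
   if k = 0,  e = dim_K (S/J) = sum_d H_J(d)  (J graded, H_J eventually 0). *)
Definition has_degree (J : pset K s) (e : rat) : Prop :=
  exists k, krull_dim J k /\
   (if k is k'.+1 then
      forall eps : rat, 0 < eps -> exists N, forall d, (N <= d)%N ->
        `| (k'`!)%:R * (hilbert_fun J d)%:R / (d%:R ^+ k') - e | < eps
    else exists N, (forall d, (N <= d)%N -> hilbert_fun J d = 0%N) /\
                   e = (\big[addn/0%N]_(d < N) hilbert_fun J d)%:R).

(* Points of P^{s-1}(K): normalized representatives (first nonzero coordinate 1). *)
Definition normalized (x : {ffun 'I_s -> K}) : bool :=
  [exists i : 'I_s, (x i == 1) && [forall j : 'I_s, (j < i)%N ==> (x j == 0)]].

Definition vanishing_ideal (X : {set {ffun 'I_s -> K}}) : pset K s :=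
  gen_ideal (fun h => exists d, h \is d.-homog /\ forall x, x \in X -> h.@[x] = 0).

Definition zeros_in (X : {set {ffun 'I_s -> K}}) (f : S) : {set {ffun 'I_s -> K}} :=
  [set x in X | f.@[x] == 0].

End FinDefs.

Definition monomial_order (s : nat) (ord : rel 'X_{1..s}) : Prop :=
  reflexive ord /\ antisymmetric ord /\ transitive ord /\ total ord /\
  (forall m, ord 0%MM m) /\
  (forall m1 m2 m, ord m1 m2 -> ord (m1 + m)%MM (m2 + m)%MM).

Section OrderDefs.
Variables (K : fieldType) (s : nat) (ord : rel 'X_{1..s}).
Local Notation S := {mpoly K[s]}.

Definition is_lead_monom (f : S) (m : 'X_{1..s}) : Prop :=
  m \in msupp f /\ forall m', m' \in msupp f -> ord m' m.

Definition initial_ideal (J : pset K s) : pset K s :=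
  gen_ideal (fun h => exists g m, J g /\ g != 0 /\ is_lead_monom g m /\ h = 'X_[m]).

Definition standard_monom (J : pset K s) (d : nat) (m : 'X_{1..s}) : Prop :=
  mdeg m = d /\ ~ initial_ideal J 'X_[m].

Definition F_set (J : pset K s) (d : nat) : pset K s :=
  fun f => f != 0 /\ (forall m, m \in msupp f -> standard_monom J d m) /\
           ~ (forall h, colon J f h <-> J h).

End OrderDefs.

Definition is_min_nat (P : nat -> Prop) (x : nat) : Prop :=
  P x /\ forall y, P y -> (x <= y)%N.

Definition is_max_rat (P : rat -> Prop) (x : rat) : Prop :=
  P x /\ forall y, P y -> y <= x.

Definition min_distance (K : finFieldType) (s : nat) (X : {set {ffun 'I_s -> K}})
  (d : nat) (delta : nat) : Prop :=
  is_min_nat (fun v => exists f : {mpoly K[s]}, f \is d.-homog /\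
                 ~ vanishing_ideal X f /\ v = (#|X| - #|zeros_in X f|)%N) delta.

(* The vanishing ideal I of a finite set X of projective points has Krull
   dimension 1: a prime over I contains the kernel of [p |-> p(T x)] for some
   x in X, and K[T] has no chain of three primes.  Homogeneous interpolation on
   X makes the Hilbert function of I eventually |X|, and that of (I, f), for f a
   form of degree d, eventually |V_X(f)|; so deg S/I = |X| and, when f has a
   zero on X, deg S/(I, f) = |V_X(f)|.  The elements of F_{<,d} are the forms of
   degree d outside I with a zero on X that are supported on standard monomials,
   and reducing a form modulo I to its standard normal form keeps its zeros on
   X.  Hence max deg S/(I, f) = max |V_X(f)| = |X| - delta_X(d), where the
   maximum may be taken over forms with a zero because |X| >= 2 provides one;
   and delta_X(d) >= 1 since a form outside I does not vanish on all of X. *)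

From HB Require Import structures.
From mathcomp Require Import all_boot all_order all_algebra.
From mathcomp Require Import mpoly.
From mathcomp Require Import boolp zify.

Set Implicit Arguments.
Unset Strict Implicit.
Unset Printing Implicit Defensive.

Import Order.TTheory GRing.Theory Num.Theory.
Local Open Scope ring_scope.

Section Ideals.
Variables (K : fieldType) (s : nat).
Local Notation S := {mpoly K[s]}.
Implicit Types (G P : pset K s) (f g : S).

Lemma ideal0 P : is_ideal P -> P 0.
Proof. by case. Qed.

Lemma idealD P f g : is_ideal P -> P f -> P g -> P (f + g).
Proof. by case=> _ [+ _]; apply. Qed.

Lemma idealMl P f g : is_ideal P -> P g -> P (f * g).
Proof. by case=> _ [_]; apply. Qed.

Lemma idealMr P f g : is_ideal P -> P f -> P (f * g).
Proof. by rewrite mulrC; apply: idealMl. Qed.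

Lemma idealZ P c f : is_ideal P -> P f -> P (c *: f).
Proof. by rewrite -mul_mpolyC; apply: idealMl. Qed.

Lemma idealB P f g : is_ideal P -> P f -> P g -> P (f - g).
Proof. by move=> HP Pf Pg; rewrite -scaleN1r; apply: idealD => //; apply: idealZ. Qed.

Lemma idealBK P f g : is_ideal P -> P f -> P (f - g) -> P g.
Proof. by move=> HP Pf Pfg; rewrite -[g](subKr f); apply: idealB. Qed.

Lemma ideal_sum P (I : eqType) (r : seq I) (F : I -> S) :
  is_ideal P -> (forall i, i \in r -> P (F i)) -> P (\sum_(i <- r) F i).
Proof.
move=> HP PF; rewrite big_seq; apply: (big_ind P) => //; first exact: ideal0.
by move=> ? ? ? ?; apply: idealD.
Qed.

Lemma gen_ideal_is_ideal G : is_ideal (gen_ideal G).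
Proof.
split; first by exists [::]; rewrite big_nil.
split=> [_ _ [la [-> Ha]] [lb [-> Hb]]|r _ [l [-> Hl]]].
  exists (la ++ lb); rewrite big_cat; split=> // p.
  by rewrite mem_cat => /orP[/Ha|/Hb].
exists [seq (r * p.1, p.2) | p <- l]; split.
  by rewrite big_map mulr_sumr; apply: eq_bigr => p _; rewrite mulrA.
by move=> q /mapP[p pl ->]; exact: Hl pl.
Qed.

Lemma mem_gen_ideal G g : G g -> gen_ideal G g.
Proof.
move=> Gg; exists [:: (1, g)]; rewrite big_seq1 mul1r; split=> // p.
by rewrite inE => /eqP ->.
Qed.

Lemma gen_ideal_min G P : is_ideal P -> (forall g, G g -> P g) ->
  forall f, gen_ideal G f -> P f.
Proof.
move=> HP GP _ [l [-> Gl]]; apply: ideal_sum => // p pl.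
by apply: idealMl => //; apply/GP/Gl.
Qed.

End Ideals.

Section LineEval.
Variables (K : fieldType) (s : nat).
Local Notation S := {mpoly K[s]}.
Implicit Types (x : 'I_s -> K) (p : S).

(* [line_eval x p] is [p(T x)] in [K[T]], the restriction of [p] to the line
   spanned by [x]. *)
Definition line_eval x : S -> {poly K} := mmap polyC (fun i => (x i)%:P * 'X).

HB.instance Definition _ x :=
  GRing.RMorphism.copy (line_eval x) (mmap polyC (fun i => (x i)%:P * 'X)).

Lemma line_eval_mmap1 x m :
  mmap1 (fun i => (x i)%:P * 'X) m = (\prod_i x i ^+ m i)%:P * 'X^(mdeg m).
Proof.
rewrite /mmap1 (eq_bigr (fun i => (x i ^+ m i)%:P * 'X ^+ m i)); last first.
  by move=> i _; rewrite exprMn rmorphXn.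
by rewrite big_split /= rmorph_prod prodrXr mdegE.
Qed.

Lemma line_evalZ x c p : line_eval x (c *: p) = c%:P * line_eval x p.
Proof. exact: mmapZ. Qed.

Lemma line_evalXU x j : x j = 1 -> line_eval x 'X_j = 'X.
Proof. by move=> xj; rewrite /line_eval mmapX mmap1U xj mul1r. Qed.

Lemma coef_line_eval x p e : (line_eval x p)`_e = (pihomog mdeg e p).@[x].
Proof.
rewrite /line_eval /mmap coef_sum pihomogE raddf_sum /= [RHS]big_mkcond /=.
apply: eq_bigr => m _; rewrite line_eval_mmap1 mulrA -rmorphM coefCM coefXn.
by rewrite mevalZ mevalX eq_sym; case: eqP; rewrite ?mulr1 ?mulr0.
Qed.

Lemma line_eval_homog x e p : p \is e.-homog -> line_eval x p = (p.@[x])%:P * 'X^e.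
Proof.
move=> hp; apply/polyP => i; rewrite coef_line_eval coefCM coefXn.
have [->|ne] := eqVneq i e; first by rewrite pihomog_dE // mulr1.
by rewrite (pihomog_ne0 (b := i) (d := e)) ?meval0 ?mulr0 // eq_sym.
Qed.

Lemma line_eval_homog_eq0 x e p : p \is e.-homog ->
  (line_eval x p == 0) = (p.@[x] == 0).
Proof.
move=> hp; rewrite (line_eval_homog _ hp) mulf_eq0 polyC_eq0 expf_eq0.
by rewrite polyX_eq0 andbF orbF.
Qed.

Definition poly_in_var (j : 'I_s) (q : {poly K}) : S :=
  \sum_(i < size q) q`_i *: 'X_j ^+ i.

Lemma line_eval_poly_in_var x j q : x j = 1 -> line_eval x (poly_in_var j q) = q.
Proof.
move=> xj; rewrite raddf_sum -[RHS]coefK poly_def; apply: eq_bigr => i _.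
by rewrite /= line_evalZ rmorphXn /= line_evalXU // mul_polyC.
Qed.

End LineEval.

Section VanishingIdeal.
Variables (K : finFieldType) (s : nat) (X : {set {ffun 'I_s -> K}}).
Local Notation S := {mpoly K[s]}.
Local Notation I := (vanishing_ideal X).
Implicit Types (h : S) (Z : {set {ffun 'I_s -> K}}).

Lemma line_eval_kernel_is_ideal Z :
  is_ideal (fun h : S => forall x, x \in Z -> line_eval x h = 0).
Proof.
split; first by move=> x _; rewrite rmorph0.
split=> [a b Ha Hb|r a Ha] x xZ; first by rewrite rmorphD /= Ha ?Hb ?addr0.
by rewrite rmorphM /= Ha ?mulr0.
Qed.

Lemma vanishing_ideal_is_ideal : is_ideal I.
Proof. exact: gen_ideal_is_ideal. Qed.

Lemma vanishing_idealP h : I h <-> forall x, x \in X -> line_eval x h = 0.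
Proof.
split=> [Ih|Hh].
  apply: (gen_ideal_min (line_eval_kernel_is_ideal X) _ Ih).
  by move=> g [e [hg Hg]] x xX; rewrite (line_eval_homog _ hg) Hg // mul0r.
rewrite (pihomog_partitionE (mf := mdeg) (leqnn (msize h))).
apply: ideal_sum; first exact: vanishing_ideal_is_ideal.
move=> e _; apply: mem_gen_ideal; exists e; split; first exact: pihomogP.
by move=> x xX; rewrite -coef_line_eval Hh // coef0.
Qed.

Lemma vanishing_ideal_homogP e h : h \is e.-homog ->
  I h <-> forall x, x \in X -> h.@[x] = 0.
Proof.
move=> hh; rewrite vanishing_idealP.
split=> H x /H /eqP; first by rewrite (line_eval_homog_eq0 _ hh) => /eqP.
by rewrite -(line_eval_homog_eq0 _ hh) => /eqP.
Qed.

Lemma vanishing_ideal_pihomog e h : I h -> I (pihomog mdeg e h).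
Proof.
move=> /vanishing_idealP Ih; apply/(vanishing_ideal_homogP (pihomogP _ _ _)) => x xX.
by rewrite -coef_line_eval Ih // coef0.
Qed.

End VanishingIdeal.

Section PolyPrime.
Variable K : fieldType.
Implicit Types (Q : {poly K} -> Prop) (a b : {poly K}).

Definition poly_prime Q :=
  Q 0 /\ (forall a b, Q a -> Q b -> Q (a + b)) /\ (forall r a, Q a -> Q (r * a)) /\
  ~ Q 1 /\ (forall a b, Q (a * b) -> Q a \/ Q b).

Lemma poly_prime_maximal Q1 Q2 a b : poly_prime Q1 -> poly_prime Q2 ->
  (forall c, Q1 c -> Q2 c) -> Q1 a -> a != 0 -> Q2 b -> Q1 b.
Proof.
move=> [_ [_ [Q1M [_ Q1P]]]] [_ [Q2D [Q2M [nQ21 _]]]] Q12 Q1a anz Q2b.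
suff Hn : forall n (p : {poly K}), (size p <= n)%N -> Q1 p -> p != 0 -> Q1 b.
  exact: Hn _ a (leqnn _) Q1a anz.
elim=> [|n IH] p sp Q1p pnz.
  by move: sp; rewrite leqn0 size_poly_eq0 (negbTE pnz).
have [[u v] /= uv] := Bezoutp b p.
set g := u * b + v * p in uv.
have Q2g : Q2 g by apply: Q2D; apply: Q2M => //; apply: Q12.
have gb : g %| b by rewrite (eqp_dvdl _ uv) dvdp_gcdl.
have gp : g %| p by rewrite (eqp_dvdl _ uv) dvdp_gcdr.
have gnz : g != 0.
  by rewrite -size_poly_eq0 (eqp_size uv) size_poly_eq0 gcdp_eq0 negb_and pnz orbT.
have [/eqP/size_poly1P [c cnz gc]|sg1] := eqVneq (size g) 1%N.
  by case: nQ21; rewrite -polyC1 -(mulVf cnz) polyCM -gc; apply: Q2M.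
have sg2 : (1 < size g)%N by rewrite ltn_neqAle eq_sym sg1 size_poly_gt0.
have Ep := divpK gp.
have : Q1 (p %/ g * g) by rewrite Ep.
case/Q1P => [Q1q|Q1g]; last by rewrite -(divpK gb); apply: Q1M.
have qnz : p %/ g != 0 by apply: contra_neq pnz => q0; rewrite -Ep q0 mul0r.
apply: (IH _ _ Q1q qnz); rewrite size_divp // leq_subLR (leq_trans sp) //.
by rewrite addnC -addn1 leq_add2l -ltnS prednK // ltnW.
Qed.

Lemma no_poly_prime_chain2 Q0 Q1 Q2 :
  poly_prime Q0 -> poly_prime Q1 -> poly_prime Q2 -> (forall a, Q1 a -> Q2 a) ->
  (exists a, Q1 a /\ ~ Q0 a) -> (exists b, Q2 b /\ ~ Q1 b) -> False.
Proof.
move=> [Q00 _] pQ1 pQ2 Q12 [a [Q1a nQ0a]] [b [Q2b nQ1b]].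
have anz : a != 0 by apply: contraPneq nQ0a => ->.
exact/nQ1b/(poly_prime_maximal pQ1 pQ2 Q12 Q1a anz Q2b).
Qed.

End PolyPrime.

Section KrullDim.
Variables (K : finFieldType) (s : nat).
Local Notation S := {mpoly K[s]}.
Implicit Types (J P : pset K s) (x : {ffun 'I_s -> K}) (h : S).

Lemma normalized_pivot x : normalized x ->
  exists j : 'I_s, x j = 1 /\ forall k : 'I_s, (k < j)%N -> x k = 0.
Proof.
case/existsP => j /andP[/eqP xj /forallP x0]; exists j; split=> // k kj.
by apply/eqP; move: (x0 k); rewrite kj.
Qed.

Lemma prime_prod P (T : eqType) (r : seq T) (F : T -> S) :
  is_prime P -> P (\prod_(i <- r) F i) -> exists2 i, i \in r & P (F i).
Proof.
move=> [_ [nP1 Pprime]]; elim: r => [|i r IH]; first by rewrite big_nil.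
rewrite big_cons => /Pprime[PFi|/IH[j jr PFj]]; first by exists i; rewrite ?mem_head.
by exists j; rewrite // inE jr orbT.
Qed.

Lemma rmorph_kernel_prime (R : idomainType) (ev : {rmorphism S -> R}) :
  is_prime (fun h => ev h = 0).
Proof.
split; first split; first exact: rmorph0.
  split=> [a b Ha Hb|r a Ha]; first by rewrite rmorphD /= Ha Hb addr0.
  by rewrite rmorphM /= Ha mulr0.
split; first by rewrite rmorph1; apply/eqP/oner_neq0.
by move=> a b /eqP; rewrite rmorphM mulf_eq0 => /orP[] /eqP; [left|right].
Qed.

Lemma prime_chain1 J x : normalized x -> (forall h, J h -> line_eval x h = 0) ->
  prime_chain J 1.
Proof.
move=> nx Jx; have [j [xj _]] := normalized_pivot nx.
exists (fun i => if i is 0%N then fun h => line_eval x h = 0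
                 else fun h => (horner_eval 0 \o line_eval x) h = 0).
split; first by case=> [|[]] // _; apply: rmorph_kernel_prime.
split=> // -[] // _; split=> [h /= ->|]; first by rewrite horner_evalE horner0.
exists 'X_j; rewrite /= line_evalXU // horner_evalE hornerX.
by split=> // /eqP; rewrite polyX_eq0.
Qed.

Lemma prime_chain_le J j k : (j <= k)%N -> prime_chain J k -> prime_chain J j.
Proof.
move=> jk [c [cprime [Jc cstrict]]]; exists c.
split=> [i ij|]; first by apply/cprime/(leq_trans ij).
by split=> // i ij; apply/cstrict/(leq_trans ij).
Qed.

Lemma krull_dim1 J : prime_chain J 1 -> ~ prime_chain J 2 ->
  forall k, krull_dim J k <-> k = 1%N.
Proof.
move=> J1 nJ2 k; split=> [[Jk nJk1]|->] //.
by case: k Jk nJk1 => [|[|k]] // Jk; case: nJ2; apply: prime_chain_le Jk.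
Qed.

Variable X : {set {ffun 'I_s -> K}}.
Local Notation I := (vanishing_ideal X).

Lemma prime_contains_line_kernel P : is_prime P -> (forall h, I h -> P h) ->
  exists2 x, x \in X & forall h, line_eval x h = 0 -> P h.
Proof.
move=> Pprime IP; apply: contrapT => noX.
have /choice[w Hw] : forall x, exists h, x \in X -> line_eval x h = 0 /\ ~ P h.
  move=> x; have [xX|] := boolP (x \in X); last by exists 0.
  have /existsNP[h /not_implyP[h0 nPh]] : ~ forall h, line_eval x h = 0 -> P h.
    by move=> Px; apply: noX; exists x.
  by exists h.
have Iw : I (\prod_(x <- enum X) w x).
  apply/vanishing_idealP => x xX.
  rewrite rmorph_prod (bigD1_seq x) ?mem_enum ?enum_uniq //=.
  by rewrite (proj1 (Hw x xX)) mul0r.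
have [x /[!mem_enum] xX] := prime_prod Pprime (IP _ Iw).
by case: (Hw x xX).
Qed.

Section LineImage.
Variables (x : {ffun 'I_s -> K}) (j : 'I_s).
Hypothesis xj : x j = 1.

Definition line_image P (q : {poly K}) := exists2 h, P h & line_eval x h = q.

Lemma line_image_prime P : is_prime P -> (forall h, line_eval x h = 0 -> P h) ->
  poly_prime (line_image P).
Proof.
move=> [HP [nP1 Pprime]] Pker.
have Psub h h' : P h -> line_eval x h = line_eval x h' -> P h'.
  move=> Ph Ehh'; apply: (idealBK HP Ph); apply: Pker.
  by rewrite rmorphB /= Ehh' subrr.
split; first by exists 0; rewrite ?rmorph0 //; apply: ideal0.
split.
  by move=> _ _ [a Pa <-] [b Pb <-]; exists (a + b); rewrite ?rmorphD //; apply: idealD.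
split.
  move=> r _ [a Pa <-]; exists (poly_in_var j r * a); first exact: idealMl.
  by rewrite rmorphM /= line_eval_poly_in_var.
split; first by move=> [a Pa a1]; apply/nP1/(Psub a) => //; rewrite a1 rmorph1.
move=> a b [c Pc Ec].
have : P (poly_in_var j a * poly_in_var j b).
  by apply: Psub Pc _; rewrite Ec rmorphM /= !line_eval_poly_in_var.
case/Pprime=> Pab; [left; exists (poly_in_var j a) | right; exists (poly_in_var j b)];
  by rewrite ?line_eval_poly_in_var.
Qed.

Lemma line_image_strict P P' : is_ideal P -> (forall h, line_eval x h = 0 -> P h) ->
  subset_strict P P' ->
  (forall q, line_image P q -> line_image P' q) /\
  exists q, line_image P' q /\ ~ line_image P q.
Proof.
move=> HP Pker [PP' [a [P'a nPa]]]; split.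
  by move=> _ [b Pb <-]; exists b => //; apply: PP'.
exists (line_eval x a); split; first by exists a.
case=> b Pb Eb; apply/nPa/(idealBK HP Pb)/Pker.
by rewrite rmorphB /= Eb subrr.
Qed.

End LineImage.

Hypothesis HXproj : forall x, x \in X -> normalized x.

(* Through [line_eval x], a chain of primes of length 2 over [I] would give one
   in the principal ideal domain [K[T]]. *)
Lemma no_prime_chain2 J : (forall h, I h -> J h) -> ~ prime_chain J 2.
Proof.
move=> IJ [c [cprime [Jc cstrict]]].
have P0 := cprime 0%N isT; have P1 := cprime 1%N isT; have P2 := cprime 2%N isT.
have [x xX ker0] := prime_contains_line_kernel P0 (fun h Ih => Jc _ (IJ _ Ih)).
have [j [xj _]] := normalized_pivot (HXproj xX).
have [[c01 _] [c12 _]] := (cstrict 0%N isT, cstrict 1%N isT).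
have ker1 h : line_eval x h = 0 -> c 1%N h by move/ker0/c01.
have ker2 h : line_eval x h = 0 -> c 2%N h by move/ker1/c12.
have [_ strict01] := line_image_strict (proj1 P0) ker0 (cstrict 0%N isT).
have [sub12 strict12] := line_image_strict (proj1 P1) ker1 (cstrict 1%N isT).
exact: (no_poly_prime_chain2 (line_image_prime xj P0 ker0) (line_image_prime xj P1 ker1)
  (line_image_prime xj P2 ker2) sub12 strict01 strict12).
Qed.

End KrullDim.

Section Interpolation.
Variables (K : finFieldType) (s : nat).
Local Notation S := {mpoly K[s]}.
Implicit Types x y : {ffun 'I_s -> K}.

Lemma normalized_minor_neq0 x y : normalized x -> normalized y -> x != y ->
  exists i j, x i * y j != x j * y i.
Proof.
move=> nx ny nxy; apply: contrapT => Hn.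
have minor0 i j : x i * y j = x j * y i.
  by apply/eqP; apply: contrapT => /negP ne; apply: Hn; exists i, j.
have [px [xp x0]] := normalized_pivot nx; have [py [yp y0]] := normalized_pivot ny.
have pxy : px = py.
  apply/val_inj/eqP; rewrite eqn_leq; apply/andP; split; rewrite leqNgt; apply/negP => lt.
    have := minor0 py px; rewrite (x0 py lt) xp yp mul0r mul1r.
    by move=> /esym/eqP; rewrite oner_eq0.
  have := minor0 px py; rewrite (y0 px lt) xp yp mulr0 mul1r.
  by move=> /eqP; rewrite oner_eq0.
move/eqP: nxy; apply; apply/ffunP => i.
by have := minor0 i px; rewrite xp pxy yp mulr1 mul1r.
Qed.

Lemma dhomogXU (i : 'I_s) : ('X_i : S) \is 1.-homog.
Proof.
by change (('X_[U_(i)] : S) \is 1.-homog); rewrite dhomogX; apply/eqP/mdeg1.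
Qed.

Lemma separating_linear_form x y : normalized x -> normalized y -> x != y ->
  exists L : S, [/\ L \is 1.-homog, L.@[y] = 0 & L.@[x] != 0].
Proof.
move=> nx ny nxy; have [i [j xy]] := normalized_minor_neq0 nx ny nxy.
exists (y j *: 'X_i - y i *: 'X_j); split.
- by apply: rpredB; apply: rpredZ; apply: dhomogXU.
- by rewrite !mevalB !mevalZ !mevalXU mulrC subrr.
- by rewrite !mevalB !mevalZ !mevalXU subr_eq0 mulrC [y i * _]mulrC.
Qed.

Lemma separating_form x (r : seq {ffun 'I_s -> K}) : normalized x ->
  (forall y, y \in r -> normalized y /\ y != x) ->
  exists A : S,
    [/\ A \is (size r).-homog, forall y, y \in r -> A.@[y] = 0 & A.@[x] != 0].
Proof.
move=> nx; elim: r => [|y r IH] Hr.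
  by exists 1; rewrite dhomog1 meval1 oner_eq0.
have [|A [hA Ar Ax]] := IH; first by move=> z zr; apply: Hr; rewrite inE zr orbT.
have [ny nyx] := Hr y (mem_head _ _).
have xy : x != y by rewrite eq_sym.
have [L [hL Ly Lx]] := separating_linear_form nx ny xy.
exists (A * L); split.
- by rewrite /= -add1n addnC; apply: dhomogM.
- by move=> z /[!inE] /orP[/eqP ->|zr]; rewrite mevalM ?Ly ?mulr0 // Ar // mul0r.
- by rewrite mevalM mulf_neq0.
Qed.

Variable X : {set {ffun 'I_s -> K}}.
Hypothesis HXproj : forall x, x \in X -> normalized x.

Lemma indicator_form x D : normalized x -> (#|X| <= D)%N ->
  exists B : S,
    [/\ B \is D.-homog, forall y, y \in X -> y != x -> B.@[y] = 0 & B.@[x] != 0].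
Proof.
move=> nx XD; set r := [seq y <- enum X | y != x].
have [|A [hA Ar Ax]] := @separating_form x r nx.
  by move=> y; rewrite mem_filter mem_enum => /andP[yx /HXproj].
have [j [xj _]] := normalized_pivot nx.
have rD : (size r <= D)%N.
  by rewrite (leq_trans _ XD) // cardE size_filter count_size.
exists (A * 'X_j ^+ (D - size r)); split.
- by have := dhomogM hA (dhomogMn (D - size r) (dhomogXU j)); rewrite mul1n subnKC.
- by move=> y yX yx; rewrite mevalM Ar ?mul0r // mem_filter yx mem_enum.
- by rewrite mevalM rmorphXn /= mevalXU xj expr1n mulr1.
Qed.

Lemma homog_interpolation D (c : {ffun 'I_s -> K} -> K) : (#|X| <= D)%N ->
  exists2 g : S, g \is D.-homog & forall x, x \in X -> g.@[x] = c x.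
Proof.
move=> XD.
suff [g hg Hg] : exists2 g : S, g \is D.-homog &
    forall y, y \in X -> g.@[y] = if y \in enum X then c y else 0.
  by exists g => // x xX; rewrite Hg // mem_enum xX.
have : all (mem X) (enum X) by apply/allP => x; rewrite mem_enum.
elim: (enum X) => [|x r IH] /=.
  by exists 0; [apply: rpred0 | move=> y _; rewrite meval0].
move=> /andP[xX /IH[g hg Hg]].
have [xr|xr] := boolP (x \in r).
  by exists g => // y yX; rewrite Hg // inE; case: eqP => // ->; rewrite xr.
have [B [hB B0 Bx]] := indicator_form (HXproj xX) XD.
exists (g + (c x / B.@[x]) *: B); first by apply: rpredD => //; apply: rpredZ.
move=> y yX; rewrite mevalD mevalZ Hg // inE.
have [->|yx] := eqVneq y x; first by rewrite (negbTE xr) add0r divfK.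
by rewrite B0 ?mulr0 ?addr0.
Qed.

End Interpolation.

Section HilbertFunction.
Variables (K : finFieldType) (s D : nat).
Local Notation S := {mpoly K[s]}.
Local Notation n := (nmonoms s D).

Definition monom_of (i : 'I_n) : 'X_{1..s} :=
  val (val (@enum_val _ (mem {: monoms s D}) i)).

Lemma mdeg_monom_of i : mdeg (monom_of i) = D.
Proof. by rewrite /monom_of; case: (enum_val i) => m /= /eqP. Qed.

Lemma poly_ofE (v : 'rV[K]_n) : poly_of v = \sum_(i < n) v 0 i *: 'X_[monom_of i].
Proof. by []. Qed.

Lemma poly_of_homog (v : 'rV[K]_n) : poly_of v \is D.-homog.
Proof.
rewrite poly_ofE; apply: rpred_sum => i _; apply: rpredZ.
by rewrite dhomogX; apply/eqP/mdeg_monom_of.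
Qed.

Lemma poly_ofDZ (a : K) (v w : 'rV[K]_n) :
  poly_of (a *: v + w) = a *: poly_of v + poly_of w.
Proof.
rewrite !poly_ofE scaler_sumr -big_split /=; apply: eq_bigr => i _.
by rewrite !mxE scalerDl scalerA.
Qed.

Lemma sum_monom_of (F : 'X_{1..s} -> S) :
  \sum_(i < n) F (monom_of i) = \sum_(m : 'X_{1..s < D.+1} | mdeg m == D) F m.
Proof.
rewrite /monom_of.
rewrite -(big_enum_val (A := mem {: monoms s D}) (fun u : monoms s D => F (val (val u)))).
rewrite [RHS](reindex_omap (val : monoms s D -> _) insub); last first.
  by move=> i Pi; rewrite insubT.
apply: eq_big => [[m hm]|u _] //=; rewrite hm insubT /=.
by apply/esym/eqP; congr Some; apply: val_inj.
Qed.

Lemma poly_of_surj (g : S) : g \is D.-homog -> exists v : 'rV[K]_n, poly_of v = g.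
Proof.
move=> hg; exists (\row_i g@_(monom_of i)); rewrite poly_ofE.
under eq_bigr do rewrite mxE.
rewrite (sum_monom_of (fun m => g@_m *: 'X_[m])) -(pihomogwE mdeg D).
  exact: pihomog_dE.
rewrite msizeE; apply/bigmax_leqP_seq => m mg _.
by rewrite ltnS (dhomog_mf hg mg).
Qed.

Variable Z : {set {ffun 'I_s -> K}}.

Definition eval_on_set (v : 'rV[K]_n) : 'rV[K]_#|Z| :=
  \row_(k < #|Z|) (poly_of v).@[@enum_val _ (mem Z) k].

Lemma eval_on_set_is_linear : linear eval_on_set.
Proof. by move=> a v w; apply/rowP => k; rewrite !mxE poly_ofDZ mevalD mevalZ. Qed.

HB.instance Definition _ :=
  GRing.isLinear.Build K _ _ _ eval_on_set eval_on_set_is_linear.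

(* The degree-[D] part of [J] is the kernel of evaluation on [Z], which is onto
   by interpolation. *)
Lemma hilbert_fun_eq_card (J : pset K s) :
  (forall g : S, g \is D.-homog -> (J g <-> forall z, z \in Z -> g.@[z] = 0)) ->
  (forall c : {ffun 'I_s -> K} -> K,
     exists2 g : S, g \is D.-homog & forall z, z \in Z -> g.@[z] = c z) ->
  hilbert_fun J D = #|Z|.
Proof.
move=> JZ interpZ; pose E := linfun eval_on_set.
have kerE v : (v \in lker E) = `[< J (poly_of v) >].
  rewrite memv_ker lfunE /=; apply/idP/asboolP.
    move/eqP/rowP => E0; apply/(JZ _ (poly_of_homog v)) => z zZ.
    by have := E0 (enum_rank_in zZ z); rewrite !mxE enum_rankK_in.
  move/(JZ _ (poly_of_homog v)) => J0.
  by apply/eqP/rowP => k; rewrite !mxE J0 ?enum_valP.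
have spanJ : span (graded_piece J D) = lker E.
  apply/eqP; rewrite eqEsubv; apply/andP; split.
    by apply/span_subvP => v; rewrite mem_filter kerE => /andP[].
  apply/subvP => v; rewrite kerE => Jv; apply: memv_span.
  by rewrite mem_filter Jv mem_enum inE.
have imgE : limg E = fullv.
  apply/eqP; rewrite eqEsubv subvf /=; apply/subvP => w _.
  have [g hg Hg] := interpZ (fun z => \sum_(k < #|Z|) (enum_val k == z)%:R * w 0 k).
  have [v Hv] := poly_of_surj hg.
  suff -> : w = E v by apply/memv_img/memvf.
  apply/rowP => k; rewrite lfunE /= mxE Hv Hg ?enum_valP // (bigD1 k) //= eqxx mul1r.
  by rewrite big1 ?addr0 // => k' nk; rewrite (inj_eq enum_val_inj) (negbTE nk) mul0r.
have := limg_ker_dim E fullv; rewrite capfv imgE !dimvf /= !dim_matrix !mul1r.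
by rewrite /hilbert_fun spanJ; move: (\dim _) => k <-; rewrite addKn.
Qed.

End HilbertFunction.

Lemma has_degree_dim1 (K : finFieldType) (s : nat) (J : pset K s) (z N : nat) :
  prime_chain J 1 -> ~ prime_chain J 2 ->
  (forall D, (N <= D)%N -> hilbert_fun J D = z) ->
  forall e, has_degree J e <-> e = z%:R.
Proof.
move=> J1 nJ2 HJ e; split=> [[k [/(krull_dim1 J1 nJ2) -> He]]|->].
  apply/eqP; apply: contrapT => /negP ne.
  have [|N' HN'] := He `|z%:R - e|; first by rewrite normr_gt0 subr_eq0 eq_sym.
  have := HN' _ (leq_maxr N N').
  by rewrite HJ ?leq_maxl // fact0 expr0 divr1 mul1r ltxx.
exists 1%N; split; first exact/(krull_dim1 J1 nJ2).
move=> eps eps0; exists N => D ND.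
by rewrite HJ // fact0 expr0 divr1 mul1r subrr normr0.
Qed.

Section VanishingIdealDegree.
Variables (K : finFieldType) (s : nat) (X : {set {ffun 'I_s -> K}}).
Hypothesis HXproj : forall x, x \in X -> normalized x.
Local Notation S := {mpoly K[s]}.
Local Notation I := (vanishing_ideal X).
Implicit Types (f g h : S).

Lemma card_zeros_in_le f : (#|zeros_in X f| <= #|X|)%N.
Proof. by apply/subset_leq_card/subsetP => x; rewrite inE => /andP[]. Qed.

Lemma ideal_add_line_eval f d h : f \is d.-homog -> ideal_add I f h ->
  forall z, z \in zeros_in X f -> line_eval z h = 0.
Proof.
move=> hf; apply: (gen_ideal_min (line_eval_kernel_is_ideal _)).
move=> g [Ig|->] z /[!inE] /andP[zX /eqP fz].
  exact: (proj1 (vanishing_idealP X g)).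
by rewrite (line_eval_homog _ hf) fz mul0r.
Qed.

Lemma ideal_add_homogP f d D g :
  f \is d.-homog -> (d + #|X| <= D)%N -> g \is D.-homog ->
  ideal_add I f g <-> forall z, z \in zeros_in X f -> g.@[z] = 0.
Proof.
move=> hf dXD hg; split=> [Hg z zZ|g0].
  by apply/eqP; rewrite -(line_eval_homog_eq0 _ hg) (ideal_add_line_eval hf Hg zZ).
(* Interpolate [a] as [g / f] on [X]; then [g - a f] vanishes on [X]. *)
have dD : (d <= D)%N by apply: leq_trans dXD; apply: leq_addr.
have XDd : (#|X| <= D - d)%N by rewrite leq_subRL // addnC.
have [a ha Ha] := homog_interpolation HXproj (fun x => g.@[x] / f.@[x]) XDd.
have haf : a * f \is D.-homog by have := dhomogM ha hf; rewrite subnK.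
have Igaf : I (g - a * f).
  apply/(vanishing_ideal_homogP _ (rpredB hg haf)) => x xX; rewrite mevalB mevalM Ha //.
  have [fx|fx] := eqVneq f.@[x] 0; last by rewrite divfK // subrr.
  by rewrite fx mulr0 subr0; apply: g0; rewrite inE xX fx eqxx.
have ideal_If := gen_ideal_is_ideal (fun h => I h \/ h = f).
rewrite -(subrK (a * f) g); apply: (idealD ideal_If); first by apply: mem_gen_ideal; left.
by apply: (idealMl _ ideal_If); apply: mem_gen_ideal; right.
Qed.

Lemma hilbert_fun_vanishing_ideal D : (#|X| <= D)%N -> hilbert_fun I D = #|X|.
Proof.
move=> XD; apply: hilbert_fun_eq_card => [g hg|c]; last exact: homog_interpolation.
exact: (vanishing_ideal_homogP X hg).
Qed.

Lemma hilbert_fun_ideal_add f d D : f \is d.-homog -> (d + #|X| <= D)%N ->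
  hilbert_fun (ideal_add I f) D = #|zeros_in X f|.
Proof.
move=> hf dXD; apply: hilbert_fun_eq_card => [g hg|c].
  exact: (ideal_add_homogP hf dXD hg).
apply: homog_interpolation => [x /[!inE] /andP[/HXproj]//|].
by rewrite (leq_trans (card_zeros_in_le f)) // (leq_trans _ dXD) // leq_addl.
Qed.

Lemma has_degree_vanishing_ideal : (0 < #|X|)%N -> has_degree I #|X|%:R.
Proof.
case/card_gt0P => x xX.
have I1 : prime_chain I 1.
  by apply: (prime_chain1 (HXproj xX)) => h /vanishing_idealP; apply.
by apply/(has_degree_dim1 I1 (no_prime_chain2 HXproj (fun h Ih => Ih))
  hilbert_fun_vanishing_ideal).
Qed.

Lemma has_degree_ideal_add f d :
  f \is d.-homog -> (exists2 x, x \in X & f.@[x] = 0) ->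
  forall e, has_degree (ideal_add I f) e <-> e = #|zeros_in X f|%:R.
Proof.
move=> hf [x xX fx]; have xZ : x \in zeros_in X f by rewrite inE xX fx eqxx.
have If1 : prime_chain (ideal_add I f) 1.
  by apply: (prime_chain1 (HXproj xX)) => h /(ideal_add_line_eval hf)/(_ x xZ).
have nIf2 : ~ prime_chain (ideal_add I f) 2.
  by apply: (no_prime_chain2 HXproj) => h Ih; apply: mem_gen_ideal; left.
by apply: (has_degree_dim1 If1 nIf2) => D; apply: hilbert_fun_ideal_add hf.
Qed.

End VanishingIdealDegree.

Section NormalForm.
Variables (K : finFieldType) (s : nat) (X : {set {ffun 'I_s -> K}}).
Local Notation S := {mpoly K[s]}.
Local Notation I := (vanishing_ideal X).
Variable ord : rel 'X_{1..s}.
Hypothesis Hord : monomial_order ord.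
Variable d : nat.
Local Notation standard := (standard_monom ord I d).
Implicit Types (f g h : S) (m : 'X_{1..s}).

Lemma ord_refl m : ord m m.
Proof. by case: Hord. Qed.

Lemma ord_anti m1 m2 : ord m1 m2 -> ord m2 m1 -> m1 = m2.
Proof. by case: Hord => _ [anti _] h12 h21; apply: anti; rewrite h12 h21. Qed.

Lemma ord_trans m2 m1 m3 : ord m1 m2 -> ord m2 m3 -> ord m1 m3.
Proof. by case: Hord => _ [_ [trans _]]; apply: trans. Qed.

Lemma ord_total m1 m2 : ord m1 m2 || ord m2 m1.
Proof. by case: Hord => _ [_ [_ [total _]]]. Qed.

Lemma ord_addr m1 m2 m : ord m1 m2 -> ord (m1 + m)%MM (m2 + m)%MM.
Proof. by case: Hord => _ [_ [_ [_ [_ add]]]]; apply: add. Qed.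

Lemma seq_ord_max (r : seq 'X_{1..s}) : r != [::] ->
  exists2 m, m \in r & forall m', m' \in r -> ord m' m.
Proof.
elim: r => [|a r IH] //= _.
have [->|/IH[m mr Hm]] := eqVneq r [::].
  by exists a => [|m' /[!inE] /eqP ->]; rewrite ?mem_head ?ord_refl.
have [am|ma] := orP (ord_total a m).
  by exists m => [|m' /[!inE] /orP[/eqP ->|/Hm]]; rewrite ?inE ?mr ?orbT.
exists a => [|m' /[!inE] /orP[/eqP ->|/Hm m'm]]; rewrite ?mem_head ?ord_refl //.
exact: ord_trans m'm ma.
Qed.

Lemma exists_lead_monom f : f != 0 -> exists m, is_lead_monom ord f m.
Proof. by rewrite -msupp_eq0 => /seq_ord_max[m mf Hm]; exists m. Qed.

Lemma mcoeff_pihomog e h m :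
  (pihomog mdeg e h)@_m = if mdeg m == e then h@_m else 0.
Proof.
rewrite pihomogE raddf_sum /=.
under eq_bigr do rewrite mcoeffZ mcoeffX mulr_natr mulrb.
have [mh|] := boolP (m \in msupp h).
  rewrite (big_rem m mh) /= eqxx big1_seq ?addr0; first by case: ifP.
  move=> m' /andP[_ m'h]; case: eqVneq => // mm'; move: m'h.
  by rewrite mm' mem_rem_uniqF ?msupp_uniq.
rewrite mcoeff_msupp negbK => /eqP hm0; rewrite hm0 if_same big1_seq // => m' _.
by case: (eqVneq m' m) => // ->.
Qed.

Definition ord_rank m : nat :=
  #|[pred m' : 'X_{1..s < d.+1} | [&& mdeg m' == d, ord m' m & bmnm m' != m]]|.

Lemma ord_rank_lt m1 m2 : mdeg m1 = d -> ord m1 m2 -> m1 != m2 ->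
  (ord_rank m1 < ord_rank m2)%N.
Proof.
move=> dm1 o12 n12; apply/proper_card/properP; split.
  apply/subsetP => m /[!inE] /and3P[-> o1 n1] /=; rewrite (ord_trans o1 o12).
  by apply: contra_neq n12 => em; rewrite -em in o12 *; rewrite (ord_anti o1 o12).
have dm1' : (mdeg m1 < d.+1)%N by rewrite dm1.
by exists (BMultinom dm1'); rewrite !inE /= ?dm1 ?eqxx ?o12 ?n12 ?andbF.
Qed.

Lemma initial_ideal_monom (J : pset K s) m : initial_ideal ord J 'X_[m] ->
  exists g0 m0 k, [/\ J g0, is_lead_monom ord g0 m0 & m = (m0 + k)%MM].
Proof.
move=> [l [El Hl]]; apply: contrapT => Hn.
suff : ('X_[m] : S)@_m = 0 by rewrite mcoeffX eqxx => /eqP; rewrite oner_eq0.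
rewrite El raddf_sum /=; apply: big1_seq => p /andP[_ pl] /=.
have [g0 [m0 [Jg0 [_ [Hld ->]]]]] := Hl p pl.
apply/eqP; rewrite mcoeff_eq0 (perm_mem (msuppMX p.1 m0)); apply/negP.
by case/mapP => k _ mk; apply: Hn; exists g0, m0, k.
Qed.

Lemma ord_rank_inj m1 m2 : mdeg m1 = d -> mdeg m2 = d ->
  ord_rank m1 = ord_rank m2 -> m1 = m2.
Proof.
move=> d1 d2 r12; apply/eqP/contraT => n12; have [o|o] := orP (ord_total m1 m2).
  by move: (ord_rank_lt d1 o n12); rewrite r12 ltnn.
by move: (ord_rank_lt d2 o); rewrite eq_sym r12 ltnn => /(_ n12).
Qed.

Lemma initial_monom_reducer m : mdeg m = d -> initial_ideal ord I 'X_[m] ->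
  exists r : S,
    [/\ I r, r \is d.-homog, r@_m = 1 & forall m', r@_m' != 0 -> ord m' m].
Proof.
move=> dm /initial_ideal_monom[g0 [m0 [k [Ig0 [m0g0 lead] Em]]]].
pose g1 := g0 * 'X_[k]; pose g2 := pihomog mdeg d g1.
have g2m : g2@_m = g0@_m0 by rewrite mcoeff_pihomog dm eqxx Em addmC mcoeffMX.
have g2lead m' : g2@_m' != 0 -> ord m' m.
  rewrite mcoeff_pihomog; case: ifP => _; last by rewrite eqxx.
  rewrite -mcoeff_msupp (perm_mem (msuppMX g0 k)) => /mapP[m1 m1g0 ->].
  by rewrite Em addmC; apply/ord_addr/lead.
have g2m0 : g2@_m != 0 by rewrite g2m -mcoeff_msupp.
exists ((g2@_m)^-1 *: g2); split.
- have ideal_I := vanishing_ideal_is_ideal X.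
  by apply/(idealZ _ ideal_I)/vanishing_ideal_pihomog/(idealMr _ ideal_I).
- by apply/rpredZ/pihomogP.
- by rewrite mcoeffZ mulVf.
- by move=> m'; rewrite mcoeffZ mulf_eq0 negb_or => /andP[_ /g2lead].
Qed.

Lemma reduce_nonstandard h m : h \is d.-homog -> h@_m != 0 -> ~ standard m ->
  exists h', [/\ h' \is d.-homog, I (h - h'), h'@_m = 0 &
                 forall m', h'@_m' != h@_m' -> ord m' m].
Proof.
move=> hh hm nsm; have dm : mdeg m = d by apply: (dhomog_mf hh); rewrite mcoeff_msupp.
have /(initial_monom_reducer dm)[r [Ir hr rm rlead]] : initial_ideal ord I 'X_[m].
  by apply: contrapT => nin; apply: nsm.
exists (h - h@_m *: r); split.
- by apply/rpredB/rpredZ.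
- by rewrite opprB addrC subrK; exact: idealZ (vanishing_ideal_is_ideal X) Ir.
- by rewrite mcoeffB mcoeffZ rm mulr1 subrr.
- move=> m'; rewrite mcoeffB mcoeffZ => ne; apply: rlead.
  by apply: contra_neq ne => ->; rewrite mulr0 subr0.
Qed.

Lemma normal_form_rank n h : h \is d.-homog ->
  (forall m, h@_m != 0 -> ~ standard m -> (ord_rank m < n)%N) ->
  exists f, [/\ f \is d.-homog, forall m, m \in msupp f -> standard m & I (h - f)].
Proof.
elim: n h => [|n IH] h hh Hh.
  exists h; split=> //; last by rewrite subrr; apply: ideal0 (vanishing_ideal_is_ideal X).
  by move=> m; rewrite mcoeff_msupp => hm; apply: contrapT => /(Hh m hm).
have [[m [hm nsm rm]]|none] :=
  pselect (exists m, [/\ h@_m != 0, ~ standard m & ord_rank m = n]); last first.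
  apply: IH => // m hm nsm; move: (Hh m hm nsm).
  by rewrite ltnS leq_eqVlt => /orP[/eqP rm|//]; case: none; exists m.
have dm : mdeg m = d by apply: (dhomog_mf hh); rewrite mcoeff_msupp.
have [h' [hh' Ihh' h'm h'lt]] := reduce_nonstandard hh hm nsm.
have [m' h'm' nsm'|f [hf sf Ih'f]] := IH h' hh'; last first.
  exists f; split=> //; rewrite -(subrK h' h) -addrA.
  by apply: idealD => //; apply: vanishing_ideal_is_ideal.
have dm' : mdeg m' = d by apply: (dhomog_mf hh'); rewrite mcoeff_msupp.
have m'm : m' != m by apply: contraNneq h'm' => ->; rewrite h'm.
have [e|/h'lt o] := eqVneq h'@_m' h@_m'; last by rewrite -rm ord_rank_lt.
rewrite e in h'm'; move: (Hh m' h'm' nsm'); rewrite ltnS leq_eqVlt -rm.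
by case/orP=> // /eqP/(ord_rank_inj dm' dm)/eqP; rewrite (negbTE m'm).
Qed.

Lemma normal_form h : h \is d.-homog ->
  exists f, [/\ f \is d.-homog, forall m, m \in msupp f -> standard m & I (h - f)].
Proof.
move=> hh; apply: (@normal_form_rank #|{: 'X_{1..s < d.+1}}|.+1) => // m _ _.
by rewrite ltnS max_card.
Qed.

Lemma F_set_homog f : F_set ord I d f ->
  [/\ f \is d.-homog, ~ I f & exists2 x, x \in X & f.@[x] = 0].
Proof.
move=> [fnz [sf colonI]]; have hf : f \is d.-homog by apply/dhomogP => m /sf[].
split=> // [If|].
  have [m [mf lead]] := exists_lead_monom fnz; have [_] := sf m mf; apply.
  by apply: mem_gen_ideal; exists f, m.
apply: contrapT => nz; apply: colonI => h; rewrite /colon.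
split=> [/vanishing_idealP Ihf|Ih]; last exact: idealMr (vanishing_ideal_is_ideal X) Ih.
apply/vanishing_idealP => x xX; apply/eqP.
move: (Ihf x xX); rewrite rmorphM /= (line_eval_homog _ hf) => /eqP.
rewrite !mulf_eq0 polyC_eq0 expf_eq0 polyX_eq0 andbF orbF => /orP[//|/eqP fx].
by case: nz; exists x.
Qed.

Hypothesis HXproj : forall x, x \in X -> normalized x.

Lemma F_set_normal_form g : g \is d.-homog -> ~ I g ->
  (exists2 x, x \in X & g.@[x] = 0) ->
  exists2 f, F_set ord I d f & zeros_in X f = zeros_in X g.
Proof.
move=> hg nIg [x0 x0X gx0]; have [f [hf sf Igf]] := normal_form hg.
have gf x : x \in X -> g.@[x] = f.@[x].
  move=> xX; have := proj1 (vanishing_ideal_homogP X (rpredB hg hf)) Igf x xX.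
  by rewrite mevalB => /eqP; rewrite subr_eq0 => /eqP.
exists f; last by apply/setP => x; rewrite !inE; case: (boolP (x \in X)) => //= /gf ->.
split; first by apply/eqP => f0; apply: nIg; move: Igf; rewrite f0 subr0.
split=> // colonI.
(* The form [B] vanishing on [X] except at the zero [x0] of [f] is not in [I],
   whereas [B f] is. *)
have [B [hB B0 Bx0]] := indicator_form HXproj (HXproj x0X) (leqnn #|X|).
have IBf : I (B * f).
  apply/(vanishing_ideal_homogP _ (dhomogM hB hf)) => x xX; rewrite mevalM.
  have [->|xx0] := eqVneq x x0; first by rewrite -gf // gx0 mulr0.
  by rewrite B0 // mul0r.
have IB : I B := proj1 (colonI B) IBf.
by move: Bx0; rewrite (proj1 (vanishing_ideal_homogP X hB) IB x0 x0X) eqxx.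
Qed.

End NormalForm.

Section MinimumDistance.
Variables (K : finFieldType) (s : nat) (X : {set {ffun 'I_s -> K}}).
Hypothesis HXproj : forall x, x \in X -> normalized x.
Local Notation S := {mpoly K[s]}.
Local Notation I := (vanishing_ideal X).
Variable d : nat.

Lemma exists_homog_with_zero : (2 <= #|X|)%N -> (1 <= d)%N ->
  exists w : S, [/\ w \is d.-homog, ~ I w & exists2 x, x \in X & w.@[x] = 0].
Proof.
move=> /card_gt1P[x1 [x2 [x1X x2X x12]]] d1.
have [j [x1j _]] := normalized_pivot (HXproj x1X).
have [L [hL Lx2 Lx1]] := separating_linear_form (HXproj x1X) (HXproj x2X) x12.
have hw : L * 'X_j ^+ (d - 1) \is d.-homog.
  by have := dhomogM hL (dhomogMn (d - 1) (dhomogXU K j)); rewrite mul1n subnKC.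
exists (L * 'X_j ^+ (d - 1)); split=> //; last by exists x2; rewrite // mevalM Lx2 mul0r.
move/(vanishing_ideal_homogP X hw)/(_ x1 x1X)/eqP.
by rewrite mevalM rmorphXn /= mevalXU x1j expr1n mulr1 (negbTE Lx1).
Qed.

Lemma card_zeros_in_lt (g : S) :
  g \is d.-homog -> ~ I g -> (#|zeros_in X g| < #|X|)%N.
Proof.
move=> hg nIg; apply/proper_card/properP; split.
  by apply/subsetP => x /[!inE] /andP[].
apply: contrapT => nz; apply: nIg; apply/(vanishing_ideal_homogP X hg) => x xX.
by apply/eqP; apply: contrapT => /negP gx; apply: nz; exists x; rewrite // inE xX.
Qed.

Lemma min_distance_exists : (exists f : S, f \is d.-homog /\ ~ I f) ->
  exists delta, min_distance X d delta.
Proof.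
move=> [f [hf nIf]].
have [|delta /asboolP Pdelta delta_min] := ex_minnP (P := fun v => `[< exists f : S,
    f \is d.-homog /\ ~ I f /\ v = (#|X| - #|zeros_in X f|)%N >]).
  by exists (#|X| - #|zeros_in X f|)%N; apply/asboolP; exists f.
by exists delta; split=> // v Pv; apply/delta_min/asboolP.
Qed.

End MinimumDistance.

Unset Implicit Arguments.

Theorem corollary4p8 (K : finFieldType) (s : nat)
  (X : {set {ffun 'I_s -> K}})
  (HXproj : forall x, x \in X -> normalized x)
  (HX : (2 <= #|X|)%N)
  (ord : rel 'X_{1..s}) (Hord : monomial_order ord)
  (d : nat) (Hd : (1 <= d)%N) :
  exists (delta : nat) (degI m : rat),
    min_distance X d delta /\
    has_degree (vanishing_ideal X) degI /\
    is_max_rat (fun e => exists f, F_set ord (vanishing_ideal X) d f /\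
                           has_degree (ideal_add (vanishing_ideal X) f) e) m /\
    delta%:R = degI - m /\
    (1 <= delta)%N.
Proof.
have [w [hw nIw [x xX wx]]] := exists_homog_with_zero HXproj HX Hd.
have [delta min_delta] := min_distance_exists (ex_intro _ w (conj hw nIw)).
have [[g [hg [nIg Edelta]]] delta_min] := min_delta.
have card_le := card_zeros_in_le X.
have zeros_max f : f \is d.-homog -> ~ vanishing_ideal X f ->
    (#|zeros_in X f| <= #|zeros_in X g|)%N.
  move=> hf nIf; have := delta_min _ (ex_intro _ f (conj hf (conj nIf erefl))).
  by move: (card_le g) (card_le f); rewrite Edelta; lia.
(* A minimiser [g] has at least as many zeros as [w], hence one. *)
have [x0 /[!inE] /andP[x0X /eqP gx0]] : exists x0, x0 \in zeros_in X g.
  apply/card_gt0P/(leq_trans _ (zeros_max w hw nIw)).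
  by apply/card_gt0P; exists x; rewrite inE xX wx eqxx.
have [f Ff Zfg] := F_set_normal_form Hord HXproj hg nIg (ex_intro2 _ _ x0 x0X gx0).
exists delta, #|X|%:R, #|zeros_in X g|%:R; split=> //.
split; first exact: has_degree_vanishing_ideal HXproj (ltnW HX).
split; last split.
- split=> [|e [f' [Ff' He]]].
    have [hf _ fzero] := F_set_homog Hord Ff.
    by exists f; split=> //; apply/(has_degree_ideal_add HXproj hf fzero); rewrite Zfg.
  have [hf' nIf' f'zero] := F_set_homog Hord Ff'.
  rewrite (proj1 (has_degree_ideal_add HXproj hf' f'zero e) He) ler_nat.
  exact: zeros_max.
- by rewrite Edelta natrB ?card_le.
- by rewrite Edelta subn_gt0; apply: card_zeros_in_lt hg nIg.
Qed.
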